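(* Let $U$ be the bilateral shift $(Ug)(n)=g(n-1)$ on $\ell^2(\mathbb Z)$. For every $h\in\mathbb N$, \[(U+U^* )^h=\sum_{k=0}^{\lfloor h/2\rfloor}\alpha_{h,k}\sum_{\substack{\ell,m\ge0\\ \ell+m=h-2k}}U^m(U^* )^\ell,\qquad\alpha_{h,k}:=\binom hk-\binom h{k-1}.\]
   Context: $\mathbb N=\{0,1,2,\dots\}$; convention $\binom h{-1}=0$. *)

From HB Require Import structures.
From mathcomp Require Import all_boot all_order all_algebra.
From mathcomp Require Import complex.
From mathcomp Require Import all_classical all_reals all_analysis.
Set Implicit Arguments. Unset Strict Implicit. Unset Printing Implicit Defensive.
Import Order.TTheory GRing.Theory Num.Theory.
Local Open Scope ring_scope.
Local Open Scope classical_set_scope.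

Definition in_l2 (R : realType) (g : int -> R[i]) : Prop :=
  (\esum_(n in [set: int]) ((ComplexField.Normc.normc (g n)) ^+ 2)%:E < +oo)%E.

Definition shiftU (R : realType) (g : int -> R[i]) : int -> R[i] :=
  fun n => g (n - 1).

(* Its Hilbert adjoint on l^2(Z): (U^* g)(n) = g(n+1). *)
Definition shiftUstar (R : realType) (g : int -> R[i]) : int -> R[i] :=
  fun n => g (n + 1).

Definition shiftUplusUstar (R : realType) (g : int -> R[i]) : int -> R[i] :=
  fun n => shiftU g n + shiftUstar g n.

Definition alpha (h k : nat) : int :=
  ('C(h, k))%:Z - (if k is k'.+1 then 'C(h, k') else 0%N)%:Z.

From HB Require Import structures.
From mathcomp Require Import all_boot all_order all_algebra.
From mathcomp Require Import complex.
From mathcomp Require Import all_classical all_reals all_analysis.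
From mathcomp Require Import zify.
Import Order.TTheory GRing.Theory Num.Theory.
Local Open Scope ring_scope.

(* Since U and U^* commute, (U + U^* )^h g (n) = \sum_j C(h, j) g (n + h - 2j),
   and U^m (U^* )^l g (n) = g (n - m + l), so the k-th inner sum on the right
   is \sum_(k <= j <= h - k) g (n + h - 2j).  Exchanging the sums, the
   coefficient of g (n + h - 2j) is \sum_(k <= min(j, h - j)) alpha h k, which
   telescopes to C(h, min(j, h - j)) = C(h, j).  The identity holds pointwise
   for every sequence. *)

Lemma sum_alpha (h c : nat) : \sum_(k < c.+1) alpha h k = 'C(h, c)%:Z.
Proof.
elim: c => [|c IHc]; first by rewrite big_ord1 /alpha subr0.
by rewrite big_ord_recr /= IHc /alpha /= addrC subrK.
Qed.

Lemma double_ord_half_le {h : nat} (k : 'I_(h./2).+1) : (2 * k <= h)%N.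
Proof. by rewrite mul2n -geq_half_double -ltnS. Qed.

Lemma sum_window (V : nmodType) (h k : nat) (G : nat -> V) : (2 * k <= h)%N ->
  \sum_(m < (h - 2 * k).+1) G (k + m)%N =
  \sum_(j < h.+1 | (k <= minn j (h - j))%N) G j.
Proof.
move=> le_2k_h; rewrite -(big_mkord xpredT (fun m => G (k + m)%N)).
rewrite -(big_mkord (fun j => k <= minn j (h - j))%N G).
transitivity (\sum_(0 + k <= j < (h - k).+1) G j).
  rewrite big_addn (_ : (h - k).+1 - k = (h - 2 * k).+1)%N; last lia.
  by apply: eq_bigr => m _; rewrite addnC.
rewrite add0n (big_nat_widenl _ _ _ _ _ (leq0n k)).
rewrite (big_nat_widen _ _ _ _ _ (_ : _ <= h.+1)%N); last lia.
by rewrite big_nat_cond [RHS]big_nat_cond; apply: eq_bigl => j; lia.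
Qed.

Lemma sum_alpha_below_minn (h j : nat) : (j <= h)%N ->
  \sum_(k < (h./2).+1 | (k <= minn j (h - j))%N) alpha h k = 'C(h, j)%:Z.
Proof.
move=> le_j_h; set c := minn j (h - j).
have le_c_half : (c <= h./2)%N by rewrite geq_half_double -addnn; lia.
transitivity (\sum_(k < c.+1) alpha h k); last first.
  by rewrite sum_alpha /c; case: leqP => // _; rewrite bin_sub.
rewrite -(big_mkord (fun k => k <= c)%N) -(big_mkord xpredT).
by rewrite [RHS](big_nat_widen _ _ _ _ _ (_ : c.+1 <= (h./2).+1)%N).
Qed.

Lemma alpha_window_sum (V : pzRingType) (h : nat) (G : nat -> V) :
  \sum_(k < (h./2).+1) (alpha h k)%:~R * \sum_(m < (h - 2 * k).+1) G (k + m)%N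
  = \sum_(j < h.+1) 'C(h, j)%:R * G j.
Proof.
under eq_bigr => k _ do rewrite sum_window ?double_ord_half_le // big_distrr.
rewrite (exchange_big_dep xpredT) //=; apply: eq_bigr => j _.
by rewrite -big_distrl /= -mulrz_sumr (sum_alpha_below_minn h j (ltn_ord j)).
Qed.

Lemma sum_binS (V : pzRingType) (h : nat) (F : nat -> V) :
  \sum_(j < h.+2) 'C(h.+1, j)%:R * F j =
  \sum_(j < h.+1) 'C(h, j)%:R * F j + \sum_(j < h.+1) 'C(h, j)%:R * F j.+1.
Proof.
rewrite big_ord_recl [in RHS]big_ord_recl /= !bin0 !mul1r -addrA; congr (_ + _).
under eq_bigr do rewrite binS natrD mulrDl.
by rewrite big_split /= big_ord_recr /= bin_small // mul0r addr0.
Qed.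

Section Shifts.
Variable R : realType.

Lemma iter_shiftU (l : nat) (g : int -> R[i]) (n : int) :
  iter l (@shiftU R) g n = g (n - l%:Z).
Proof.
elim: l n => [|l IHl] n /=; first by rewrite subr0.
by rewrite /shiftU IHl; congr g; lia.
Qed.

Lemma iter_shiftUstar (l : nat) (g : int -> R[i]) (n : int) :
  iter l (@shiftUstar R) g n = g (n + l%:Z).
Proof.
elim: l n => [|l IHl] n /=; first by rewrite addr0.
by rewrite /shiftUstar IHl; congr g; lia.
Qed.

Lemma iter_shiftUplusUstar (h : nat) (g : int -> R[i]) (n : int) :
  iter h (@shiftUplusUstar R) g n =
  \sum_(j < h.+1) 'C(h, j)%:R * g (n + h%:Z - 2 * j%:Z).
Proof.
elim: h n => [|h IHh] n; first by rewrite big_ord1 bin0 mul1r mulr0 addr0 subr0.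
rewrite iterS /shiftUplusUstar /shiftU /shiftUstar !IHh.
rewrite (sum_binS _ _ (fun j => g (n + h.+1%:Z - 2 * j%:Z))) addrC.
by congr (_ + _); apply: eq_bigr => j _; congr (_ * g _); lia.
Qed.

End Shifts.

Theorem corollary3p3 (R : realType) (h : nat) (g : int -> R[i]) (hg : in_l2 g)
  (n : int) :
  iter h (@shiftUplusUstar R) g n =
  \sum_(k < (h./2).+1)
     (alpha h k)%:~R *
     \sum_(m < (h - 2 * k).+1)
        iter m (@shiftU R) (iter (h - 2 * k - m) (@shiftUstar R) g) n.
Proof.
rewrite iter_shiftUplusUstar.
rewrite -(alpha_window_sum _ _ (fun j => g (n + h%:Z - 2 * j%:Z))).
apply: eq_bigr => k _; congr (_ * _); apply: eq_bigr => m _.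
rewrite iter_shiftU iter_shiftUstar; congr g.
by have := double_ord_half_le k; have := ltn_ord m; lia.
Qed.
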